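(* Let $p$ be a prime and let $A=\mathbb{Z}/(p^{\alpha_1})\times\cdots\times\mathbb{Z}/(p^{\alpha_m})$ for integers $1\le\alpha_1\le\cdots\le\alpha_m$. Then for every automorphism $M\in\operatorname{Aut}(A)$ whose order is a power of $p$, there exists a group endomorphism $N$ of $A$ such that $(M-\operatorname{Id})^m=pN$.
   Context: Here $M-\operatorname{Id}$ is the endomorphism $a\mapsto M(a)-a$ of the abelian group $A$, powers denote composition, and $pN$ is the endomorphism $a\mapsto pN(a)$. *)

From HB Require Import structures.
From mathcomp Require Import all_boot all_order all_algebra.
Set Implicit Arguments. Unset Strict Implicit. Unset Printing Implicit Defensive.
Import GRing.Theory.
Local Open Scope ring_scope.

Definition prodZp (p m : nat) (alpha : 'I_m -> nat) : Type :=
  forall i : 'I_m, 'Z_(p ^ alpha i).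

Section Ops.
Variables (p m : nat) (alpha : 'I_m -> nat).
Local Notation A := (prodZp p alpha).

Definition addA (a b : A) : A := fun i => a i + b i.
Definition subA (a b : A) : A := fun i => a i - b i.
Definition natmulA (a : A) (n : nat) : A := fun i => a i *+ n.

Definition is_endo (f : A -> A) : Prop :=
  forall a b : A, f (addA a b) = addA (f a) (f b).

Definition is_auto (f : A -> A) : Prop := is_endo f /\ bijective f.

Definition order_p_power (f : A -> A) : Prop :=
  exists k : nat, forall a : A, iter (p ^ k)%N f a = a.
End Ops.
Arguments order_p_power p {m alpha} f.
Arguments is_endo {p m alpha} f.
Arguments is_auto {p m alpha} f.
Arguments addA {p m alpha} a b i.
Arguments subA {p m alpha} a b i.
Arguments natmulA {p m alpha} a n i.

From Pilot Require Import Defs.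
From HB Require Import structures.
From mathcomp Require Import all_boot all_order all_algebra.
From Stdlib Require Import FunctionalExtensionality.
Set Implicit Arguments. Unset Strict Implicit. Unset Printing Implicit Defensive.
Import GRing.Theory.
Local Open Scope ring_scope.

(* Write f := (M - Id)^m.  Reduction mod p identifies A/pA with F_p^m, and
   multiplication by p^(alpha_i - 1) in the i-th coordinate identifies F_p^m
   with the p-torsion subgroup A[p]; every endomorphism of A preserves pA and
   A[p].  On both copies of F_p^m, M induces a linear map L with L^(p^k) = 1,
   so (L - 1)^(p^k) = L^(p^k) - 1 = 0 in characteristic p, and a nilpotent
   m x m matrix already satisfies (L - 1)^m = 0.  Hence f maps A into pA and
   kills A[p].  Choosing y_j with p y_j = f(e_j) for the standard generators
   e_j, we get p^(alpha_j) y_j = f(p^(alpha_j - 1) e_j) = 0 because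
   p^(alpha_j - 1) e_j lies in A[p], so N a := sum_j a_j y_j is a well-defined
   endomorphism with p N = f. *)

Lemma iter_semiconj (T S : Type) (u : T -> S) (g : T -> T) (h : S -> S) :
  (forall x, u (g x) = h (u x)) -> forall k x, u (iter k g x) = iter k h (u x).
Proof. by move=> ugh; elim=> [|k IHk] x //=; rewrite ugh IHk. Qed.

Lemma iter_subid_semiconj (U W : zmodType) (u : U -> W) g h :
    zmod_morphism u -> (forall x, u (g x) = h (u x)) ->
  forall j x, u (iter j (fun y => g y - y) x) = iter j (fun w => h w - w) (u x).
Proof. by move=> u_additive ugh; apply: iter_semiconj => x; rewrite u_additive ugh. Qed.

Section ZmodMorphism.
Variables (U V : zmodType) (f : U -> V).
Hypothesis f_additive : zmod_morphism f.

HB.instance Definition _ := GRing.isZmodMorphism.Build U V f f_additive.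

Lemma zmod_morphism0 : f 0 = 0. Proof. exact: raddf0. Qed.

Lemma zmod_morphismMn x n : f (x *+ n) = f x *+ n. Proof. exact: raddfMn. Qed.

Lemma zmod_morphism_sum I r (P : pred I) F :
  f (\sum_(i <- r | P i) F i) = \sum_(i <- r | P i) f (F i).
Proof. exact: raddf_sum. Qed.
End ZmodMorphism.

Lemma additive_zmod_morphism (U V : zmodType) (f : U -> V) :
  {morph f : x y / x + y} -> zmod_morphism f.
Proof. by move=> fD x y; apply/eqP; rewrite eq_sym subr_eq -fD subrK. Qed.

Lemma subid_zmod_morphism (U : zmodType) (g : U -> U) :
  zmod_morphism g -> zmod_morphism (fun x => g x - x).
Proof.
by move=> g_additive x y; rewrite g_additive !opprB addrACA [RHS]addrACA [- g y + _]addrC.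
Qed.

Lemma iter_zmod_morphism (U : zmodType) (g : U -> U) k :
  zmod_morphism g -> zmod_morphism (iter k g).
Proof. by move=> g_additive; elim: k => [|k IHk] x y //=; rewrite IHk g_additive. Qed.

Lemma mulrn_modn (V : zmodType) (y : V) q k : y *+ q = 0 -> y *+ (k %% q) = y *+ k.
Proof. by move=> yq0; rewrite {2}(divn_eq k q) mulrnDr mulnC mulrnA yq0 mul0rn add0r. Qed.

(* Stated over ['I_n.+2] so that it applies to both ['Z_q] and ['F_p]. *)
Lemma mulrn_ZpD (V : zmodType) n (y : V) (x z : 'I_n.+2) :
  y *+ n.+2 = 0 -> y *+ (x + z)%R = y *+ x + y *+ z.
Proof. by move=> yn0; rewrite [in LHS]/= mulrn_modn // mulrnDr. Qed.

Lemma Fp_additive_lin1_mx p n m (L : 'rV['F_p]_n -> 'rV['F_p]_m) :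
  zmod_morphism L -> forall v, L v = v *m lin1_mx L.
Proof.
move=> L_additive v.
rewrite [v in LHS]matrix_sum_delta big_ord1 zmod_morphism_sum //; apply/rowP => i.
rewrite mxE summxE; apply: eq_bigr => j _.
by rewrite -[v 0 j]natr_Zp scaler_nat zmod_morphismMn // -scaler_nat !mxE.
Qed.

Lemma iter_mulmx (R : pzSemiRingType) n (g : 'rV[R]_n.+1 -> 'rV[R]_n.+1) B :
  (forall v, g v = v *m B) -> forall k v, iter k g v = v *m B ^+ k.
Proof.
move=> gB; elim=> [|k IHk] v /=; first by rewrite expr0 mulmx1.
by rewrite gB IHk exprSr -mulmxE mulmxA.
Qed.

Lemma nilpotent_mx_exp_size (F : fieldType) n (B : 'M[F]_n.+1) N :
  B ^+ N = 0 -> B ^+ n.+1 = 0.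
Proof.
move=> BN0.
have /dvdp_exp_XsubCP[d _] : mxminpoly B %| ('X - 0%:P) ^+ N.
  by apply: mxminpoly_min; rewrite subr0 rmorphXn /= horner_mx_X.
rewrite subr0 eqp_monic ?mxminpoly_monic ?monicXn // => /eqP pB.
have le_dn : (d <= n.+1)%N.
  have := dvdp_leq (monic_neq0 (char_poly_monic B)) (mxminpoly_dvd_char B).
  by rewrite pB size_polyXn size_char_poly.
have -> : B ^+ n.+1 = B ^+ (n.+1 - d) * B ^+ d by rewrite -exprD subnK.
have : horner_mx B 'X^d = 0 by rewrite -pB mx_root_minpoly.
by rewrite rmorphXn /= horner_mx_X => ->; rewrite mulr0.
Qed.

Lemma pchar_subr1_expn (R : nzRingType) p (x : R) k :
  p \in [pchar R] -> (x - 1) ^+ (p ^ k) = x ^+ (p ^ k) - 1.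
Proof.
move=> pcharR; elim: k => [|k IHk]; first by rewrite !expn0 !expr1.
rewrite expnSr !exprM IHk -!(pFrobenius_autE pcharR).
by rewrite pFrobenius_autB_comm ?pFrobenius_aut1 //; exact: commr1.
Qed.

Lemma unipotent_mx_subr1_nilpotent p n (B : 'M['F_p]_n.+1) k :
  prime p -> B ^+ (p ^ k) = 1 -> (B - 1) ^+ n.+1 = 0.
Proof.
move=> p_pr Bpk; apply: (@nilpotent_mx_exp_size _ _ _ (p ^ k)).
by rewrite pchar_subr1_expn ?Bpk ?subrr // pchar_lalg pchar_Fp.
Qed.

Lemma Fp_unipotent_subid_nilpotent p n k (L : 'rV['F_p]_n -> 'rV['F_p]_n) :
    prime p -> zmod_morphism L -> (forall v, iter (p ^ k) L v = v) ->
  forall v, iter n (fun w => L w - w) v = 0.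
Proof.
case: n L => [|n] L p_pr L_additive Lpk v; first exact: thinmx0.
pose B := lin1_mx L.
have LB : forall w, L w = w *m B := Fp_additive_lin1_mx L_additive.
have Bpk : B ^+ (p ^ k) = 1.
  by apply/row_matrixP => i; rewrite row1 rowE -(iter_mulmx LB) Lpk.
rewrite (iter_mulmx (B := B - 1)) ?(unipotent_mx_subr1_nilpotent p_pr Bpk) ?mulmx0 //.
by move=> w; rewrite LB mulmxBr mulmx1.
Qed.

Section InducedUnipotent.
Variables (U : zmodType) (p n k : nat) (g : U -> U).
Hypotheses (p_pr : prime p) (g_additive : zmod_morphism g).
Hypothesis gpk : forall x, iter (p ^ k) g x = x.
Local Notation V := 'rV['F_p]_n.

Section Quotient.
Variables (u : U -> V) (s : V -> U).
Hypotheses (u_additive : zmod_morphism u) (sK : cancel s u).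
Hypothesis g_ker : forall x, u x = 0 -> u (g x) = 0.

Let h v := u (g (s v)).

Let quot_semiconj x : u (g x) = h (u x).
Proof.
apply/eqP; rewrite -subr_eq0 /h -u_additive -g_additive; apply/eqP/g_ker.
by rewrite u_additive sK subrr.
Qed.

Lemma quot_subid_iter_eq0 x : u (iter n (fun y => g y - y) x) = 0.
Proof.
have h_additive : zmod_morphism h.
  move=> v w; rewrite -{1}(sK v) -{1}(sK w) -u_additive -quot_semiconj.
  by rewrite g_additive u_additive.
rewrite (iter_subid_semiconj u_additive quot_semiconj).
apply: (Fp_unipotent_subid_nilpotent (k := k) p_pr h_additive) => v.
by rewrite -[v]sK -(iter_semiconj quot_semiconj) gpk.
Qed.
End Quotient.

Section Sub.
Variables (j : V -> U) (r : U -> V).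
Hypotheses (j_additive : zmod_morphism j) (jK : cancel j r).
Hypothesis g_stable : forall v, j (r (g (j v))) = g (j v).

Let h v := r (g (j v)).

Let sub_semiconj v : j (h v) = g (j v). Proof. exact: g_stable. Qed.

Lemma sub_subid_iter_eq0 v : iter n (fun y => g y - y) (j v) = 0.
Proof.
have h_additive : zmod_morphism h.
  move=> v1 v2; apply: (can_inj jK).
  by rewrite j_additive !sub_semiconj j_additive g_additive.
rewrite -(iter_subid_semiconj j_additive sub_semiconj).
rewrite (Fp_unipotent_subid_nilpotent (k := k) p_pr h_additive).
  exact: zmod_morphism0.
by move=> w; apply: (can_inj jK); rewrite (iter_semiconj sub_semiconj) gpk.
Qed.
End Sub.
End InducedUnipotent.

Section ProdZpZmodule.
Variables (p m : nat) (alpha : 'I_m -> nat).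
Local Notation A := (prodZp p alpha).

Definition dffun_of_prodZp (a : A) : {dffun forall i, 'Z_(p ^ alpha i)} :=
  [ffun i => a i].
Definition prodZp_of_dffun (f : {dffun forall i, 'Z_(p ^ alpha i)}) : A :=
  fun i => f i.
Lemma dffun_of_prodZpK : cancel dffun_of_prodZp prodZp_of_dffun.
Proof.
by move=> a; apply: functional_extensionality_dep => i; rewrite /prodZp_of_dffun ffunE.
Qed.

HB.instance Definition _ := Choice.copy A (can_type dffun_of_prodZpK).

Definition prodZp_zero : A := fun i => 0.
Definition prodZp_opp (a : A) : A := fun i => - a i.

Lemma prodZp_addrA : associative (@Defs.addA p m alpha).
Proof. by move=> a b c; apply: functional_extensionality_dep => i; exact: addrA. Qed.
Lemma prodZp_addrC : commutative (@Defs.addA p m alpha).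
Proof. by move=> a b; apply: functional_extensionality_dep => i; exact: addrC. Qed.
Lemma prodZp_add0r : left_id prodZp_zero (@Defs.addA p m alpha).
Proof. by move=> a; apply: functional_extensionality_dep => i; exact: add0r. Qed.
Lemma prodZp_addNr : left_inverse prodZp_zero prodZp_opp (@Defs.addA p m alpha).
Proof. by move=> a; apply: functional_extensionality_dep => i; exact: addNr. Qed.

HB.instance Definition _ :=
  GRing.isZmodule.Build A prodZp_addrA prodZp_addrC prodZp_add0r prodZp_addNr.

Lemma natmulA_mulrn (a : A) k : natmulA a k = a *+ k.
Proof.
elim: k => [|k IHk]; apply: functional_extensionality_dep => i.
  by rewrite /natmulA mulr0n.
by rewrite mulrS -IHk /natmulA mulrS.
Qed.

Lemma prodZp_mulrnE (a : A) k i : (a *+ k) i = a i *+ k.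
Proof. by rewrite -natmulA_mulrn. Qed.

Lemma prodZp_sumE (I : Type) (r : seq I) (P : pred I) (F : I -> A) i :
  (\sum_(j <- r | P j) F j) i = \sum_(j <- r | P j) F j i.
Proof. exact: (big_morph (fun a : A => a i)). Qed.

Lemma is_endo_zmod_morphism (f : A -> A) : is_endo f -> zmod_morphism f.
Proof. exact: additive_zmod_morphism. Qed.

Definition prodZp_unit (j : 'I_m) : A := fun i => (i == j)%:R.

Lemma prodZp_sum_unit (a : A) : a = \sum_j prodZp_unit j *+ a j.
Proof.
apply: functional_extensionality_dep => i.
rewrite prodZp_sumE (bigD1 i) //= big1 => [|j /negbTE ji].
  by rewrite addr0 prodZp_mulrnE /prodZp_unit eqxx natr_Zp.
by rewrite prodZp_mulrnE /prodZp_unit eq_sym ji mul0rn.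
Qed.
End ProdZpZmodule.

Section ProdZpReduction.
Variables (p m : nat) (alpha : 'I_m -> nat).
Hypotheses (p_pr : prime p) (alpha_gt0 : forall i, (0 < alpha i)%N).
Local Notation A := (prodZp p alpha).
Local Notation q i := (p ^ alpha i)%N.
Local Notation c i := (p ^ (alpha i).-1)%N.

Lemma prodZp_order_split i : q i = (c i * p)%N.
Proof. by rewrite -expnSr prednK. Qed.

Lemma prodZp_order_gt1 i : (1 < q i)%N.
Proof. by rewrite -[1%N](expn0 p) ltn_exp2l ?prime_gt1. Qed.

Lemma Fp_natr_order i : (q i)%:R = 0 :> 'F_p.
Proof. by rewrite natrX (pchar_Fp_0 p_pr) expr0n gtn_eqF. Qed.

Definition reduce (a : A) : 'rV['F_p]_m := \row_i (a i : nat)%:R.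
Definition lift (v : 'rV['F_p]_m) : A := fun i => (v 0 i : nat)%:R.
Definition divp_coord (a : A) : A := fun i => ((a i : nat) %/ p)%:R.

Lemma reduce_zmod_morphism : zmod_morphism reduce.
Proof.
apply: additive_zmod_morphism => a b; apply/rowP => i; rewrite !mxE.
by apply: mulrn_ZpD; rewrite Zp_cast ?prodZp_order_gt1 ?Fp_natr_order.
Qed.

Lemma liftK : cancel lift reduce.
Proof.
move=> v; apply/rowP => i; rewrite mxE val_Zp_nat ?prodZp_order_gt1 //.
by rewrite [LHS](mulrn_modn _ (Fp_natr_order i)) natr_Zp.
Qed.

Lemma reduce_eq0 a : reduce a = 0 -> divp_coord a *+ p = a.
Proof.
move=> /rowP a0; apply: functional_extensionality_dep => i.
have /(congr1 val) : (a i : nat)%:R = 0 :> 'F_p by have := a0 i; rewrite !mxE.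
rewrite /= val_Fp_nat // => /eqP; rewrite -/(dvdn p _) => p_dvd.
by rewrite prodZp_mulrnE -mulr_natr -natrM divnK // natr_Zp.
Qed.

Lemma Zp_natr_order i : (q i)%:R = 0 :> 'Z_(q i).
Proof. exact/pchar_Zp/prodZp_order_gt1. Qed.

Lemma Zp_socle_gen_torsion i : (c i)%:R *+ p = 0 :> 'Z_(q i).
Proof. by rewrite -mulrnA -prodZp_order_split Zp_natr_order. Qed.

Definition socle_emb (v : 'rV['F_p]_m) : A := fun i => (c i)%:R *+ v 0 i.
Definition socle_coord (a : A) : 'rV['F_p]_m := \row_i ((a i : nat) %/ c i)%:R.

Lemma socle_emb_zmod_morphism : zmod_morphism socle_emb.
Proof.
apply: additive_zmod_morphism => v w; apply: functional_extensionality_dep => i.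
rewrite /socle_emb mxE; apply: mulrn_ZpD.
by rewrite Fp_cast // Zp_socle_gen_torsion.
Qed.

Lemma socle_embK : cancel socle_emb socle_coord.
Proof.
move=> v; apply/rowP => i; rewrite mxE /socle_emb -mulrnA val_Zp_nat ?prodZp_order_gt1 //.
rewrite modn_small ?mulKn ?natr_Zp ?expn_gt0 ?prime_gt0 //.
rewrite prodZp_order_split ltn_pmul2l ?expn_gt0 ?prime_gt0 //.
by rewrite -[X in (_ < X)%N](Fp_cast p_pr).
Qed.

Lemma socle_emb_torsion v : socle_emb v *+ p = 0.
Proof.
apply: functional_extensionality_dep => i.
by rewrite prodZp_mulrnE /socle_emb mulrnAC Zp_socle_gen_torsion mul0rn.
Qed.

Lemma socle_coordK a : a *+ p = 0 -> socle_emb (socle_coord a) = a.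
Proof.
move=> ap0; apply: functional_extensionality_dep => i.
have c_dvd : (c i %| a i)%N.
  have : (a i : nat)%:R *+ p = 0 :> 'Z_(q i) by rewrite natr_Zp -prodZp_mulrnE ap0.
  move=> /(congr1 val) /=; rewrite -mulrnA val_Zp_nat ?prodZp_order_gt1 // => /eqP.
  by rewrite -/(dvdn _ _) [X in (X %| _)%N]prodZp_order_split dvdn_pmul2r ?prime_gt0.
rewrite /socle_emb mxE val_Fp_nat // modn_small; last first.
  rewrite ltn_divLR ?expn_gt0 ?prime_gt0 // mulnC -prodZp_order_split.
  by apply: leq_trans (ltn_ord (a i)) _; rewrite Zp_cast ?prodZp_order_gt1.
by rewrite -mulrnA mulnC divnK // natr_Zp.
Qed.

Lemma prodZp_unit_order j : prodZp_unit p alpha j *+ q j = 0.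
Proof.
apply: functional_extensionality_dep => i; rewrite prodZp_mulrnE /prodZp_unit.
by have [->|_] := eqVneq i j; [rewrite Zp_natr_order | rewrite mul0rn].
Qed.
End ProdZpReduction.

Section ProdZpUnipotent.
Variables (p m : nat) (alpha : 'I_m -> nat) (k : nat).
Variable M : prodZp p alpha -> prodZp p alpha.
Hypotheses (p_pr : prime p) (alpha_gt0 : forall i, (0 < alpha i)%N).
Hypotheses (M_additive : zmod_morphism M) (Mpk : forall a, iter (p ^ k) M a = a).
Local Notation f := (iter m (fun b => M b - b)).

Lemma reduce_subid_iter_eq0 a : reduce (f a) = 0.
Proof.
have reduce_additive := reduce_zmod_morphism p_pr alpha_gt0.
apply: (quot_subid_iter_eq0 p_pr M_additive Mpk reduce_additive (liftK p_pr alpha_gt0)).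
move=> x /(reduce_eq0 p_pr) <-.
by rewrite !zmod_morphismMn // -scaler_nat pchar_Fp_0 ?scale0r.
Qed.

Lemma subid_iter_torsion_eq0 a : a *+ p = 0 -> f a = 0.
Proof.
move=> /(socle_coordK p_pr alpha_gt0) <-.
have socle_emb_additive := socle_emb_zmod_morphism p_pr alpha_gt0.
apply: (sub_subid_iter_eq0 p_pr M_additive Mpk socle_emb_additive).
  exact: socle_embK.
move=> v; apply: socle_coordK => //.
by rewrite -zmod_morphismMn // socle_emb_torsion // zmod_morphism0.
Qed.

Lemma subid_iter_divisible :
  exists N : prodZp p alpha -> prodZp p alpha,
    {morph N : a b / a + b} /\ forall a, f a = N a *+ p.
Proof.
have f_additive : zmod_morphism f :=
  iter_zmod_morphism m (subid_zmod_morphism M_additive).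
pose y j := divp_coord (f (prodZp_unit p alpha j)).
have y_p j : y j *+ p = f (prodZp_unit p alpha j) :=
  reduce_eq0 p_pr (reduce_subid_iter_eq0 _).
have y_order j : y j *+ (p ^ alpha j) = 0.
  rewrite (prodZp_order_split p alpha_gt0) mulnC mulrnA y_p -zmod_morphismMn //.
  apply: subid_iter_torsion_eq0.
  by rewrite -mulrnA -prodZp_order_split // prodZp_unit_order.
exists (fun a => \sum_j y j *+ a j); split => [a b | a].
  rewrite -big_split; apply: eq_bigr => j _ /=; apply: mulrn_ZpD.
  by rewrite Zp_cast ?prodZp_order_gt1 ?y_order.
rewrite {1}(prodZp_sum_unit a) zmod_morphism_sum // -sumrMnl; apply: eq_bigr => j _.
by rewrite zmod_morphismMn // -y_p mulrnAC.
Qed.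
End ProdZpUnipotent.

Theorem lemma2p7 (p m : nat) (alpha : 'I_m -> nat)
  (hp : prime p)
  (halpha1 : forall i : 'I_m, (1 <= alpha i)%N)
  (halpha_mono : forall i j : 'I_m, (i <= j)%N -> (alpha i <= alpha j)%N)
  (M : prodZp p alpha -> prodZp p alpha)
  (hM : is_auto M) (hMp : order_p_power p M) :
  exists N : prodZp p alpha -> prodZp p alpha,
    is_endo N /\
    forall a : prodZp p alpha,
      iter m (fun b => subA (M b) b) a = natmulA (N a) p.
Proof.
have [[M_endo _] [k Mpk]] := (hM, hMp).
have [N [N_endo fN]] :=
  subid_iter_divisible hp halpha1 (is_endo_zmod_morphism M_endo) Mpk.
by exists N; split=> // a; rewrite natmulA_mulrn -fN.
Qed.
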